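(* Let $n\ge1$. There exist constants $C>0$ and $\delta_0>0$ depending only on $n$ such that for every $0<\delta<\delta_0$ and every $Q\in SO(n,\mathbb C)\cap M_\delta$ there exists $U\in SO(n,\mathbb R)$ with $|Q-U|<C\delta$.
   Context: $|\cdot|$ is the operator norm. Writing $z=x+iy$ with $x,y$ real matrices, $M_\delta=\{z\in{\rm Mat}(n,\mathbb C):|y|<\delta|x|\}$. $SO(n,\mathbb C)$ is the group of complex matrices $Q$ with $QQ^T=I$, $\det Q=1$. *)

From HB Require Import structures.
From mathcomp Require Import all_boot all_order all_algebra.
From mathcomp Require Import classical_sets reals.
From mathcomp Require Import complex.
Set Implicit Arguments. Unset Strict Implicit. Unset Printing Implicit Defensive.
Import Order.TTheory GRing.Theory Num.Theory.
Local Open Scope ring_scope.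
Local Open Scope classical_set_scope.

Section Defs.
Variable R : realType.

Definition rvnorm n (v : 'cV[R]_n) : R :=
  Num.sqrt (\sum_i (v i 0) ^+ 2).

Definition cvnorm n (v : 'cV[R[i]]_n) : R :=
  Num.sqrt (\sum_i ((@complex.Re R (v i 0)) ^+ 2 + (@complex.Im R (v i 0)) ^+ 2)).

Definition ropnorm n (A : 'M[R]_n) : R :=
  sup [set rvnorm (A *m v) | v in [set v : 'cV[R]_n | rvnorm v <= 1]].

Definition copnorm n (A : 'M[R[i]]_n) : R :=
  sup [set cvnorm (A *m v) | v in [set v : 'cV[R[i]]_n | cvnorm v <= 1]].

Definition mxRe n (z : 'M[R[i]]_n) : 'M[R]_n := map_mx (@complex.Re R) z.
Definition mxIm n (z : 'M[R[i]]_n) : 'M[R]_n := map_mx (@complex.Im R) z.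

Definition mxC n (U : 'M[R]_n) : 'M[R[i]]_n := map_mx (fun r => (r%:C)%C) U.

Definition Mdelta n (delta : R) : set 'M[R[i]]_n :=
  [set z | ropnorm (mxIm z) < delta * ropnorm (mxRe z)].

Definition SOC n : set 'M[R[i]]_n :=
  [set Q | Q *m Q^T = 1%:M /\ \det Q = 1].
Definition SOR n : set 'M[R]_n :=
  [set U | U *m U^T = 1%:M /\ \det U = 1].

End Defs.

(* Write Q = X + iY with X, Y real.  The real part of Q^T Q = 1 reads
   X^T X = 1 + Y^T Y, and together with |Y| < delta |X| this forces |X| = O(1),
   hence Y = O(delta) and E := Y^T Y = O(delta^2).  A Cholesky factorisation
   1 + E = L L^T, computed by peeling off one Schur complement at a time (each
   step at most doubles the size of the perturbation), gives L = 1 + O(delta^2),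
   so U := X L^-T is orthogonal with X - U = U (L^T - 1) = O(delta^2), and
   Q - U = (X - U) + iY = O(delta).  Finally det U > 0, hence det U = 1, because
   det X is within O(delta) of det Q = 1. *)

From HB Require Import structures.
From mathcomp Require Import all_boot all_order all_algebra.
From mathcomp Require Import classical_sets reals.
From mathcomp Require Import complex.
From mathcomp Require Import perm ring lra.
Set Implicit Arguments. Unset Strict Implicit. Unset Printing Implicit Defensive.
Import Order.TTheory GRing.Theory Num.Theory.
Local Open Scope ring_scope.
Local Open Scope classical_set_scope.

Lemma sqrt1D_near1 (R : rcfType) (e : R) : `|e| <= 4^-1 ->
  let s := Num.sqrt (1 + e) in [/\ s ^+ 2 = 1 + e, 2^-1 <= s & `|s - 1| <= `|e|].
Proof.
move=> he s; have /andP[eN eP] : - 4^-1 <= e <= 4^-1 by rewrite -ler_norml.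
have s2 : s ^+ 2 = 1 + e by rewrite sqr_sqrtr //; lra.
have s0 : 0 <= s := sqrtr_ge0 _.
have s_ge : 2^-1 <= s by nra.
split=> //; have -> : e = (s - 1) * (s + 1) by rewrite mulrBl !mulrDr -expr2 s2; ring.
by rewrite normrM ler_peMr // ger0_norm; lra.
Qed.

Lemma block_mx_norm_le (R : numDomainType) m1 m2 n1 n2 (A : 'M[R]_(m1, n1))
    (B : 'M_(m1, n2)) (C : 'M_(m2, n1)) (D : 'M_(m2, n2)) c :
  (forall i j, `|A i j| <= c) -> (forall i j, `|B i j| <= c) ->
  (forall i j, `|C i j| <= c) -> (forall i j, `|D i j| <= c) ->
  forall i j, `|block_mx A B C D i j| <= c.
Proof.
move=> hA hB hC hD i j.
case: (split_ordP i) => {}i ->; case: (split_ordP j) => {}j ->.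
- by rewrite block_mxEul.
- by rewrite block_mxEur.
- by rewrite block_mxEdl.
- by rewrite block_mxEdr.
Qed.

(* [1%:M + schur_tail E] is the Schur complement of the top-left entry
   of [1%:M + E]. *)
Definition schur_tail (R : fieldType) n (E : 'M[R]_(1 + n)) : 'M[R]_n :=
  drsubmx E - (1 + ulsubmx E 0 0)^-1 *: (dlsubmx E *m (dlsubmx E)^T).

Lemma tr_schur_tail (R : fieldType) n (E : 'M[R]_(1 + n)) :
  E^T = E -> (schur_tail E)^T = schur_tail E.
Proof. by move=> Es; rewrite linearB linearZ /= trmx_mul trmxK trmx_drsub Es. Qed.

Lemma cholesky_block (R : fieldType) n (E : 'M[R]_(1 + n)) (s : R) (L : 'M[R]_n) :
  E^T = E -> s ^+ 2 = 1 + ulsubmx E 0 0 -> s != 0 ->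
  L *m L^T = 1%:M + schur_tail E ->
  let L1 := block_mx s%:M 0 (s^-1 *: dlsubmx E) L in L1 *m L1^T = 1%:M + E.
Proof.
move=> Es s2 s0 LLt L1; rewrite /L1 tr_block_mx mulmx_block.
rewrite -[E in RHS]submxK scalar_mx_block add_block_mx; congr block_mx.
- rewrite tr_scalar_mx mul0mx addr0 -scalar_mxM -expr2 s2 raddfD /=.
  by congr (_ + _); apply/matrixP => i j; rewrite !ord1 !mxE.
- rewrite mul0mx addr0 add0r mul_scalar_mx linearZ /= scalerA mulfV // scale1r.
  by rewrite trmx_dlsub Es.
- by rewrite tr_scalar_mx mul_mx_scalar trmx0 mulmx0 addr0 add0r scalerA mulfV // scale1r.
- rewrite LLt /schur_tail linearZ /= -scalemxAl -scalemxAr scalerA -invfM -expr2 s2.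
  by rewrite addrC -addrA subrK.
Qed.

Lemma schur_tail_norm_le (R : realFieldType) n (E : 'M[R]_(1 + n)) eps :
  eps <= 4^-1 -> (forall i j, `|E i j| <= eps) ->
  forall i j, `|schur_tail E i j| <= 2 * eps.
Proof.
move=> e4 Eb i j; rewrite !mxE big_ord1 !mxE.
set e := E (lshift n 0) _; set x := E _ _; set y := E _ _; set z := E _ _.
have [hx hy hz he] : [/\ `|x| <= eps, `|y| <= eps, `|z| <= eps & `|e| <= eps].
  by split; apply: Eb.
have /andP[eN eP] : - eps <= e <= eps by rewrite -ler_norml.
have c0 : 0 < (1 + e)^-1 by rewrite invr_gt0; lra.
have c2 : (1 + e)^-1 <= 2 by rewrite -[2]invrK lef_pV2 ?posrE; lra.
have yz : `|y| * `|z| <= eps * eps by apply: ler_pM.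
apply: le_trans (ler_normB _ _) _; rewrite !normrM (gtr0_norm c0).
have := normr_ge0 y; have := normr_ge0 z; nra.
Qed.

Section Cholesky.
Variable R : rcfType.

Lemma cholesky_succ n (E : 'M[R]_(1 + n)) eps :
  0 <= eps -> eps <= 4^-1 -> E^T = E -> (forall i j, `|E i j| <= eps) ->
  (exists L : 'M_n, [/\ L *m L^T = 1%:M + schur_tail E, 0 < \det L &
     forall i j, `|(L - 1%:M) i j| <= 2 * eps * 2 ^+ n.+1]) ->
  exists L : 'M_(1 + n), [/\ L *m L^T = 1%:M + E, 0 < \det L &
     forall i j, `|(L - 1%:M) i j| <= eps * 2 ^+ n.+2].
Proof.
move=> e0 e4 Es Eb [L [LLt dL Lb]].
have he : `|ulsubmx E 0 0| <= eps by rewrite !mxE; apply: Eb.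
have [s2 s_ge s1] := sqrt1D_near1 (le_trans he e4).
set s := Num.sqrt _ in s2 s_ge s1.
have s0 : 0 < s by lra.
exists (block_mx s%:M 0 (s^-1 *: dlsubmx E) L); split.
- by apply: cholesky_block; rewrite ?gt_eqF.
- by rewrite det_lblock det_scalar1 mulr_gt0.
have -> : block_mx s%:M 0 (s^-1 *: dlsubmx E) L - 1%:M =
    block_mx (s - 1)%:M 0 (s^-1 *: dlsubmx E) (L - 1%:M).
  by rewrite scalar_mx_block opp_block_mx add_block_mx !oppr0 !addr0 -raddfB.
have en2 : 2 * eps <= eps * 2 ^+ n.+2.
  have : 1 <= 2 ^+ n :> R by rewrite exprn_ege1 // ler1n.
  rewrite !exprS; nra.
apply: block_mx_norm_le => i j.
- rewrite !mxE !ord1 eqxx mulr1n; apply: le_trans s1 (le_trans he _); lra.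
- by rewrite mxE normr0 mulr_ge0 ?exprn_ge0.
- have hb : `|dlsubmx E i j| <= eps by rewrite !mxE; apply: Eb.
  have sV : s^-1 <= 2 by rewrite -[2]invrK lef_pV2 ?posrE; lra.
  rewrite [X in `|X|]mxE normrM normfV (gtr0_norm s0); apply: le_trans _ en2.
  have := normr_ge0 (dlsubmx E i j); have := invr_gt0 s; nra.
- by rewrite exprS mulrCA mulrA.
Qed.

Lemma cholesky_near1 n (E : 'M[R]_n) eps :
  0 <= eps -> eps * 2 ^+ n.+1 <= 1 -> E^T = E -> (forall i j, `|E i j| <= eps) ->
  exists L : 'M_n, [/\ L *m L^T = 1%:M + E, 0 < \det L &
     forall i j, `|(L - 1%:M) i j| <= eps * 2 ^+ n.+1].
Proof.
elim: n E eps => [|n IH] E eps e0 en Es Eb.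
  by exists 1%:M; split=> [|| [] //]; [apply/matrixP => -[] | rewrite det1].
have e4 : eps <= 4^-1.
  have : 1 <= 2 ^+ n :> R by rewrite exprn_ege1 // ler1n.
  rewrite !exprS in en; nra.
apply: cholesky_succ => //; apply: IH; rewrite ?mulr_ge0 ?tr_schur_tail //.
  by rewrite mulrAC -exprS mulrC.
exact: schur_tail_norm_le.
Qed.

End Cholesky.

Lemma det_orthogonal_pos (R : realDomainType) n (U : 'M[R]_n) :
  U *m U^T = 1%:M -> 0 < \det U -> \det U = 1.
Proof.
move=> UUt dU; have /eqP : \det U ^+ 2 = 1.
  by rewrite expr2 -{2}det_tr -det_mulmx UUt det1.
by rewrite sqrf_eq1 => /orP[/eqP // | /eqP dN]; rewrite dN ltr0N1 in dU.
Qed.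

Lemma gram_diag (R : comPzRingType) m n (X : 'M[R]_(m, n)) j :
  (X^T *m X) j j = \sum_k X k j ^+ 2.
Proof. by rewrite mxE; apply: eq_bigr => k _; rewrite mxE expr2. Qed.

Lemma orthogonal_entry_le1 (R : realDomainType) n (U : 'M[R]_n) i j :
  U^T *m U = 1%:M -> `|U i j| <= 1.
Proof.
move=> UtU; rewrite -(@expr_le1 _ 2) // real_normK ?num_real //.
have <- : \sum_k U k j ^+ 2 = 1 by rewrite -gram_diag UtU mxE eqxx.
by rewrite (bigD1 i) //= lerDl sumr_ge0 // => k _; apply: sqr_ge0.
Qed.

Lemma SO_near_of_gram (R : rcfType) n (X E : 'M[R]_n) eps :
  0 <= eps -> eps * 2 ^+ n.+1 <= 1 -> E^T = E -> (forall i j, `|E i j| <= eps) ->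
  X^T *m X = 1%:M + E -> 0 < \det X ->
  exists U : 'M[R]_n, [/\ U *m U^T = 1%:M, \det U = 1 &
    forall i j, `|(X - U) i j| <= n%:R * (eps * 2 ^+ n.+1)].
Proof.
move=> e0 en Es Eb XtX dX.
have [L [LLt dL Lb]] := cholesky_near1 e0 en Es Eb.
have Ltu : L^T \in unitmx by rewrite unitmxE det_tr unitfE gt_eqF.
pose U := X *m invmx L^T.
have UtU : U^T *m U = 1%:M.
  rewrite trmx_mul trmx_inv trmxK mulmxA -(mulmxA (invmx L)) XtX -LLt.
  by rewrite mulmxA mulVmx ?mul1mx ?mulmxV // -[L]trmxK unitmx_tr.
have UUt : U *m U^T = 1%:M := mulmx1C UtU.
exists U; split => //.
  by apply: det_orthogonal_pos; rewrite // det_mulmx det_inv det_tr mulr_gt0 ?invr_gt0.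
have -> : X - U = U *m (L^T - 1%:M) by rewrite mulmxBr mulmx1 -mulmxA mulVmx ?mulmx1.
move=> i j; rewrite mxE; apply: le_trans (ler_norm_sum _ _ _) _.
rewrite mulr_natl -[n in _ *+ n]card_ord -sumr_const; apply: ler_sum => k _.
rewrite normrM -[eps * _]mul1r ler_pM ?normr_ge0 ?orthogonal_entry_le1 //.
by rewrite -trmx1 -linearB mxE.
Qed.

Lemma norm_prodDB_le (R : numDomainType) k (a b : 'I_k -> R) (A B : R) :
  (forall i, `|a i| <= A) -> (forall i, `|b i| <= B) ->
  `|\prod_i (a i + b i) - \prod_i a i| <= (A + B) ^+ k - A ^+ k.
Proof.
elim: k a b => [|k IH] a b ha hb; first by rewrite !big_ord0 !expr0 !subrr normr0.
rewrite !big_ord_recl; set P := \prod_(i < k) _; set P0 := \prod_(i < k) _.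
have -> : (a 0 + b 0) * P - a 0 * P0 = (a 0 + b 0) * (P - P0) + b 0 * P0 by ring.
have -> : (A + B) ^+ k.+1 - A ^+ k.+1 =
    (A + B) * ((A + B) ^+ k - A ^+ k) + B * A ^+ k by rewrite !exprS; ring.
apply: le_trans (ler_normD _ _) _; rewrite !normrM.
apply: lerD; apply: ler_pM => //.
- exact: le_trans (ler_normD _ _) (lerD (ha _) (hb _)).
- exact: IH.
- rewrite normr_prod -[k in A ^+ k]card_ord -prodr_const.
  by apply: ler_prod => i _; rewrite normr_ge0 ha.
Qed.

Lemma norm_detDB_le (R : numDomainType) n (X Y : 'M[R]_n) (A B : R) :
  (forall i j, `|X i j| <= A) -> (forall i j, `|Y i j| <= B) ->
  `|\det (X + Y) - \det X| <= n`!%:R * ((A + B) ^+ n - A ^+ n).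
Proof.
move=> hX hY; rewrite /determinant -sumrB -card_Sn mulr_natl -sumr_const.
apply: le_trans (ler_norm_sum _ _ _) _; apply: ler_sum => s _.
rewrite -mulrBr normrM normrX normrN1 expr1n mul1r.
under eq_bigr do rewrite mxE.
exact: norm_prodDB_le.
Qed.

Lemma exprDB_le (R : realDomainType) (a d : R) n : 0 <= a -> 0 <= d ->
  (a + d) ^+ n - a ^+ n <= n%:R * d * (a + d) ^+ n.-1.
Proof.
move=> a0 d0; case: n => [|n]; first by rewrite subrr !mul0r.
elim: n => [|n IH]; first by rewrite addrAC subrr add0r mul1r mulr1.
have -> : (a + d) ^+ n.+2 - a ^+ n.+2 =
    (a + d) * ((a + d) ^+ n.+1 - a ^+ n.+1) + d * a ^+ n.+1 by rewrite !exprS; ring.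
have aX : a ^+ n.+1 <= (a + d) ^+ n.+1 by rewrite lerXn2r ?nnegrE ?addr_ge0 ?lerDl.
have ad0 : 0 <= a + d by rewrite addr_ge0.
have -> : n.+2%:R * d * (a + d) ^+ n.+1 =
    (a + d) * (n.+1%:R * d * (a + d) ^+ n) + d * (a + d) ^+ n.+1.
  by rewrite exprS !mulrSr; ring.
exact: lerD (ler_wpM2l ad0 IH) (ler_wpM2l d0 aX).
Qed.

Lemma sqrt_sum_ge (R : rcfType) n (w : 'I_n -> R) i :
  (forall k, 0 <= w k) -> Num.sqrt (w i) <= Num.sqrt (\sum_k w k).
Proof. by move=> w0; rewrite ler_wsqrtr // (bigD1 i) //= lerDl sumr_ge0. Qed.

Lemma sqrt_sum_le (R : rcfType) n (w : 'I_n -> R) B :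
  0 <= B -> (forall i, w i <= B ^+ 2) -> Num.sqrt (\sum_i w i) <= n%:R * B.
Proof.
move=> B0 wB; rewrite -[X in _ <= X]ger0_norm ?mulr_ge0 // -sqrtr_sqr ler_wsqrtr //.
apply: le_trans (_ : \sum_(i < n) B ^+ 2 <= _); first exact: ler_sum.
rewrite sumr_const card_ord -[B ^+ 2 *+ n]mulr_natl exprMn -natrX.
apply: ler_wpM2r; first exact: sqr_ge0.
by rewrite ler_nat; case: n {w wB} => // n; rewrite leq_pmull.
Qed.

Lemma mulmx_norm_le (R : numDomainType) m n p (A : 'M[R]_(m, n)) (B : 'M[R]_(n, p)) a b :
  (forall i j, `|A i j| <= a) -> (forall j k, `|B j k| <= b) ->
  forall i k, `|(A *m B) i k| <= n%:R * (a * b).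
Proof.
move=> hA hB i k; rewrite mxE; apply: le_trans (ler_norm_sum _ _ _) _.
rewrite mulr_natl -[n in _ *+ n]card_ord -sumr_const; apply: ler_sum => j _.
by rewrite normrM ler_pM.
Qed.

Section OperatorNorms.
Variable R : realType.

Lemma rvnorm0 n : rvnorm (0 : 'cV[R]_n) = 0.
Proof. by rewrite /rvnorm big1 ?sqrtr0 // => i _; rewrite mxE expr0n. Qed.

Lemma rvnorm_entry n (v : 'cV[R]_n) i : `|v i 0| <= rvnorm v.
Proof. by rewrite -sqrtr_sqr sqrt_sum_ge // => k; apply: sqr_ge0. Qed.

Lemma rvnorm_le n (v : 'cV[R]_n) B :
  0 <= B -> (forall i, `|v i 0| <= B) -> rvnorm v <= n%:R * B.
Proof.
move=> B0 hv; apply: sqrt_sum_le => // i.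
by rewrite -real_normK ?num_real // ler_sqr ?nnegrE.
Qed.

Lemma rvnorm_mulmx_le n (A : 'M[R]_n) (v : 'cV[R]_n) M :
  0 <= M -> (forall i j, `|A i j| <= M) -> rvnorm v <= 1 ->
  rvnorm (A *m v) <= n%:R * (n%:R * M).
Proof.
move=> M0 hA hv; apply: rvnorm_le; first by rewrite mulr_ge0.
rewrite -[M in n%:R * M]mulr1 => i; apply: mulmx_norm_le hA _ i 0 => j k.
by rewrite ord1; apply: le_trans (rvnorm_entry v j) hv.
Qed.

Lemma ropnorm_le n (A : 'M[R]_n) M :
  0 <= M -> (forall i j, `|A i j| <= M) -> ropnorm A <= n%:R * (n%:R * M).
Proof.
move=> M0 hA; apply: ge_sup; first by exists (rvnorm (A *m 0)), 0; rewrite //= rvnorm0.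
by move=> _ [v hv <-]; apply: rvnorm_mulmx_le.
Qed.

Lemma ropnorm_ub n (A : 'M[R]_n) (v : 'cV[R]_n) :
  rvnorm v <= 1 -> rvnorm (A *m v) <= ropnorm A.
Proof.
move=> hv; apply: sup_upper_bound; last by exists v.
split; first by exists (rvnorm (A *m v)), v.
exists (n%:R * (n%:R * \sum_i \sum_j `|A i j|)) => _ [w hw <-].
apply: rvnorm_mulmx_le => // [|i j].
  by rewrite sumr_ge0 // => i _; rewrite sumr_ge0.
rewrite (bigD1 i) //= (bigD1 j) //= -addrA lerDl.
by rewrite addr_ge0 ?sumr_ge0 // => *; rewrite sumr_ge0.
Qed.

Lemma ropnorm_ge0 n (A : 'M[R]_n) : 0 <= ropnorm A.
Proof. by rewrite -(rvnorm0 n) -(mulmx0 _ A) ropnorm_ub // rvnorm0. Qed.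

Lemma ropnorm_entry n (A : 'M[R]_n) i j : `|A i j| <= ropnorm A.
Proof.
have -> : A i j = (A *m (delta_mx j 0 : 'cV_n)) i 0.
  rewrite mxE (bigD1 j) //= !mxE !eqxx mulr1 big1 ?addr0 // => k /negbTE kj.
  by rewrite !mxE kj mulr0.
apply: le_trans (rvnorm_entry _ _) (ropnorm_ub _ _).
rewrite /rvnorm (bigD1 j) //= big1 ?addr0 ?mxE ?eqxx ?expr1n ?sqrtr1 //.
by move=> k /negbTE kj; rewrite mxE kj expr0n.
Qed.

Local Open Scope complex_scope.

Lemma cvnorm0 n : cvnorm (0 : 'cV[R[i]]_n) = 0.
Proof. by rewrite /cvnorm big1 ?sqrtr0 // => i _; rewrite mxE /= expr0n addr0. Qed.

Lemma cvnorm_entry n (v : 'cV[R[i]]_n) i : `|v i 0| <= (cvnorm v)%:C.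
Proof. by rewrite normc_def lecR sqrt_sum_ge // => k; rewrite addr_ge0 ?sqr_ge0. Qed.

Lemma cvnorm_le n (v : 'cV[R[i]]_n) B :
  0 <= B -> (forall i, `|v i 0| <= B%:C) -> cvnorm v <= n%:R * B.
Proof.
move=> B0 hv; apply: sqrt_sum_le => // i; move: (hv i); rewrite normc_def lecR.
have w0 : 0 <= complex.Re (v i 0) ^+ 2 + complex.Im (v i 0) ^+ 2.
  by rewrite addr_ge0 ?sqr_ge0.
by rewrite -{2}(sqr_sqrtr w0) ler_sqr ?nnegrE ?sqrtr_ge0.
Qed.

Lemma copnorm_le n (A : 'M[R[i]]_n) M :
  0 <= M -> (forall i j, `|A i j| <= M%:C) -> copnorm A <= n%:R * (n%:R * M).
Proof.
move=> M0 hA; apply: ge_sup; first by exists (cvnorm (A *m 0)), 0; rewrite //= cvnorm0.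
move=> _ [v hv <-]; apply: cvnorm_le => [|i]; first by rewrite mulr_ge0.
have vb j k : `|v j k| <= 1.
  by rewrite ord1; apply: le_trans (cvnorm_entry v j) _; rewrite lecR.
by apply: le_trans (mulmx_norm_le hA vb i 0) _; rewrite mulr1 rmorphM rmorph_nat.
Qed.

End OperatorNorms.

Lemma ropnorm_le_of_gram (R : realType) n (X Y : 'M[R]_n) (d : R) :
  0 <= d -> n%:R ^+ 5 * d ^+ 2 <= 2^-1 ->
  X^T *m X = 1%:M + Y^T *m Y -> ropnorm Y <= d * ropnorm X ->
  ropnorm X <= 2 * n%:R ^+ 2.
Proof.
move=> d0 hd XtX hY; set rho := ropnorm X in hY *; set N : R := n%:R.
have rho0 : 0 <= rho := ropnorm_ge0 X.
have N0 : 0 <= N := ler0n _ _.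
have Yb j : \sum_k Y k j ^+ 2 <= N * (d * rho) ^+ 2.
  rewrite /N -[n in n%:R]card_ord mulr_natl -sumr_const; apply: ler_sum => k _.
  rewrite -real_normK ?num_real // ler_sqr ?nnegrE ?mulr_ge0 //.
  exact: le_trans (ropnorm_entry Y k j) hY.
pose M := Num.sqrt (1 + N * (d * rho) ^+ 2).
have hX i j : `|X i j| <= M.
  have colj : \sum_k X k j ^+ 2 = 1 + \sum_k Y k j ^+ 2.
    by rewrite -!gram_diag XtX mxE; congr (_ + _); rewrite mxE eqxx.
  rewrite -sqrtr_sqr ler_wsqrtr // (le_trans (_ : _ <= \sum_k X k j ^+ 2)) //.
    by rewrite (bigD1 i) //= lerDl sumr_ge0 // => k _; apply: sqr_ge0.
  by rewrite colj lerD2l.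
have M2 : M ^+ 2 = 1 + N * (d * rho) ^+ 2.
  by rewrite sqr_sqrtr // addr_ge0 ?mulr_ge0 ?sqr_ge0.
have rho2 : rho ^+ 2 <= N ^+ 4 + (N ^+ 5 * d ^+ 2) * rho ^+ 2.
  have hrho : rho <= N * (N * M) := ropnorm_le (sqrtr_ge0 _) hX.
  suff -> : N ^+ 4 + (N ^+ 5 * d ^+ 2) * rho ^+ 2 = (N * (N * M)) ^+ 2.
    by rewrite ler_sqr ?nnegrE ?mulr_ge0 ?sqrtr_ge0.
  by rewrite !exprMn M2; ring.
have : (N ^+ 5 * d ^+ 2) * rho ^+ 2 <= 2^-1 * rho ^+ 2 by rewrite ler_wpM2r ?sqr_ge0.
rewrite -(@ler_sqr _ rho) ?nnegrE ?mulr_ge0 ?sqr_ge0 //; nra.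
Qed.

Section ComplexMatrices.
Variable R : realType.
Local Open Scope complex_scope.

Lemma gram_mxRe n (Q : 'M[R[i]]_n) : Q^T *m Q = 1%:M ->
  (mxRe Q)^T *m mxRe Q = 1%:M + (mxIm Q)^T *m mxIm Q.
Proof.
move=> QtQ; apply/matrixP => i j.
have := congr1 (fun M : 'M[R[i]]_n => complex.Re (M i j)) QtQ.
rewrite !mxE (raddf_sum (@complex.Re R : Rcomplex R -> R)).
have -> : complex.Re ((i == j)%:R : R[i]) = (i == j)%:R by case: (i == j).
move=> <-; rewrite -big_split /=; apply: eq_bigr => k _; rewrite !mxE.
by case: (Q k i) => a b; case: (Q k j) => c d /=; ring.
Qed.

Lemma mxC_mxRe_mxIm n (Q : 'M[R[i]]_n) : Q = mxC (mxRe Q) + 'i *: mxC (mxIm Q).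
Proof. by apply/matrixP => i j; rewrite !mxE -complexE. Qed.

Lemma normcR (r : R) : `|r%:C| = `|r|%:C.
Proof. by rewrite normc_def /= expr0n addr0 sqrtr_sqr. Qed.

Lemma normci : `|'i : R[i]| = 1.
Proof. by rewrite normc_def /= expr0n add0r expr1n sqrtr1. Qed.

Lemma normc_subR_le (z : R[i]) (r : R) :
  `|z - r%:C| <= (`|complex.Re z - r| + `|complex.Im z|)%:C.
Proof.
rewrite {1}(complexE z) addrAC -rmorphB; apply: le_trans (ler_normD _ _) _.
by rewrite normrM normci mul1r !normcR rmorphD.
Qed.

Lemma copnorm_sub_mxC_le n (Q : 'M[R[i]]_n) (U : 'M[R]_n) (a b : R) :
  0 <= a -> 0 <= b ->
  (forall i j, `|(mxRe Q - U) i j| <= a) -> (forall i j, `|mxIm Q i j| <= b) ->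
  copnorm (Q - mxC U) <= n%:R * (n%:R * (a + b)).
Proof.
move=> a0 b0 hRe hIm; apply: copnorm_le => [|i j]; first exact: addr_ge0.
rewrite !mxE; apply: le_trans (normc_subR_le _ _) _; rewrite lecR lerD //.
  by have := hRe i j; rewrite !mxE.
by have := hIm i j; rewrite mxE.
Qed.

Lemma det_mxRe_gt0 n (X Y : 'M[R]_n) (A y : R) :
  (forall i j, `|X i j| <= A) -> (forall i j, `|Y i j| <= y) -> 0 <= A -> 0 <= y ->
  \det (mxC X + 'i *: mxC Y) = 1 -> n`!%:R * (n%:R * y * (A + y) ^+ n.-1) < 1 ->
  0 < \det X.
Proof.
move=> hX hY A0 y0 dQ small.
have hXC i j : `|mxC X i j| <= A%:C by rewrite mxE normcR lecR.
have hYC i j : `|('i *: mxC Y) i j| <= y%:C.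
  by rewrite !mxE normrM normci mul1r normcR lecR.
have hdet : `|1 - \det X| <= n`!%:R * ((A + y) ^+ n - A ^+ n).
  rewrite -lecR -normcR rmorphB rmorph1 rmorphM rmorphB !rmorphXn rmorphD rmorph_nat /=.
  have <- : \det (mxC X) = (\det X)%:C := det_map_mx (real_complex R) X.
  by rewrite -[in `|_ - _|]dQ; exact: norm_detDB_le.
have := exprDB_le n A0 y0; have := ler_norm (1 - \det X).
have : 0 <= n`!%:R :> R := ler0n _ _.
nra.
Qed.

(* [2 n^2 d] is the resulting bound on the entries of [mxIm Q]; the hypotheses
   say it is small enough for [SO_near_of_gram] and [det_mxRe_gt0]. *)
Lemma SOC_near_SOR n (Q : 'M[R[i]]_n) (d : R) :
  0 <= d -> 2 * n%:R ^+ 2 * d <= 1 ->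
  n%:R * 2 ^+ n.+1 * (2 * n%:R ^+ 2 * d) <= 1 ->
  n`!%:R * (n%:R * (2 * n%:R ^+ 2 * d) * (2 * n%:R ^+ 2 + 1) ^+ n.-1) < 1 ->
  SOC Q -> ropnorm (mxIm Q) <= d * ropnorm (mxRe Q) ->
  exists U, SOR U /\
    copnorm (Q - mxC U) <= 2 * n%:R ^+ 4 * (n%:R ^+ 2 * 2 ^+ n.+1 + 1) * d.
Proof.
set N : R := n%:R; set y := 2 * N ^+ 2 * d.
move=> d0 y1 hchol hdet [QQt dQ] hM; set X := mxRe Q in hM; set Y := mxIm Q in hM.
have N0 : 0 <= N := ler0n _ _.
have y0 : 0 <= y by rewrite !mulr_ge0 ?sqr_ge0.
have P1 : 1 <= 2 ^+ n.+1 :> R by rewrite exprn_ege1 // ler1n.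
have yy : y ^+ 2 <= y by rewrite expr2 ler_piMl.
have XtX := gram_mxRe (mulmx1C QQt).
have Xnorm : ropnorm X <= 2 * N ^+ 2.
  apply: ropnorm_le_of_gram XtX hM => //.
  have -> : N ^+ 5 * d ^+ 2 = 4^-1 * (N * y ^+ 2) by rewrite /y; field.
  have : N * y ^+ 2 <= N * 2 ^+ n.+1 * y.
    by rewrite -mulrA ler_wpM2l // (le_trans yy) ?ler_peMl.
  lra.
have Xb i j : `|X i j| <= 2 * N ^+ 2 := le_trans (ropnorm_entry X i j) Xnorm.
have Yb i j : `|Y i j| <= y.
  apply: le_trans (ropnorm_entry Y i j) (le_trans hM _).
  by rewrite mulrC /y ler_wpM2r.
have dX : 0 < \det X.
  apply: det_mxRe_gt0 Xb Yb _ y0 _ _; rewrite -?mxC_mxRe_mxIm ?mulr_ge0 ?sqr_ge0 //.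
  apply: le_lt_trans hdet; rewrite ler_wpM2l // ler_wpM2l ?mulr_ge0 //.
  by rewrite lerXn2r ?nnegrE ?addr_ge0 ?mulr_ge0 ?sqr_ge0 ?lerD2l.
have Eb i j : `|(Y^T *m Y) i j| <= N * (y * y).
  by apply: mulmx_norm_le => k l; rewrite 1?[Y^T _ _]mxE; apply: Yb.
have Es : (Y^T *m Y)^T = Y^T *m Y by rewrite trmx_mul trmxK.
have eps0 : 0 <= N * (y * y) by rewrite !mulr_ge0.
have [|U [UUt dU XU]] := SO_near_of_gram eps0 _ Es Eb XtX dX.
  rewrite -expr2 mulrAC; apply: le_trans (ler_wpM2l _ yy) hchol.
  by rewrite mulr_ge0 ?exprn_ge0.
exists U; split=> //.
apply: le_trans (copnorm_sub_mxC_le _ _ XU Yb) _; rewrite ?mulr_ge0 ?exprn_ge0 //.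
have -> : 2 * N ^+ 4 * (N ^+ 2 * 2 ^+ n.+1 + 1) * d =
    N ^+ 4 * 2 ^+ n.+1 * y + N ^+ 2 * y by rewrite /y; ring.
have -> : N * (N * (N * (N * (y * y) * 2 ^+ n.+1) + y)) =
    N ^+ 4 * 2 ^+ n.+1 * y ^+ 2 + N ^+ 2 * y by ring.
by rewrite lerD2r ler_wpM2l // mulr_ge0 ?exprn_ge0.
Qed.

End ComplexMatrices.

Unset Implicit Arguments.

Theorem lemma8p1 (R : realType) (n : nat) (hn : (1 <= n)%N) :
  exists C : R, 0 < C /\
  exists delta0 : R, 0 < delta0 /\
  forall delta : R, 0 < delta -> delta < delta0 ->
  forall Q : 'M[R[i]]_n, SOC Q -> Mdelta delta Q ->
  exists U : 'M[R]_n, SOR U /\ copnorm (Q - mxC U) < C * delta.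
Proof.
set N : R := n%:R; have N1 : 1 <= N by rewrite ler1n.
pose c := 2 * N ^+ 4 * (N ^+ 2 * 2 ^+ n.+1 + 1).
pose a := N * 2 ^+ n.+1; pose b := n`!%:R * (N * (2 * N ^+ 2 + 1) ^+ n.-1).
have N0 : 0 <= N := ler0n _ _.
have a0 : 0 <= a by rewrite mulr_ge0 ?exprn_ge0.
have b0 : 0 <= b by rewrite !mulr_ge0 ?exprn_ge0 ?addr_ge0 ?mulr_ge0 ?sqr_ge0.
pose K := 2 * N ^+ 2 * (1 + a + b).
have K0 : 0 < K by rewrite !mulr_gt0 ?exprn_gt0 //; lra.
have c0 : 0 <= c by rewrite !mulr_ge0 ?addr_ge0 ?mulr_ge0 ?exprn_ge0.
exists (c + 1); split; first lra.
exists K^-1; split=> [|d d0 dK Q SOCQ /ltW MQ]; first by rewrite invr_gt0.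
have : 2 * N ^+ 2 * d * (1 + a + b) < 1.
  have -> : 2 * N ^+ 2 * d * (1 + a + b) = d * K by rewrite /K; ring.
  by rewrite -ltr_pdivlMr // div1r.
set y := 2 * N ^+ 2 * d; rewrite !mulrDr mulr1 => yK.
have y0 : 0 <= y by rewrite !mulr_ge0 //; apply: ltW.
have ya := mulr_ge0 y0 a0; have yb := mulr_ge0 y0 b0.
have [|||U [SOU QU]] := SOC_near_SOR (ltW d0) _ _ _ SOCQ MQ; rewrite -/N -/y.
- lra.
- rewrite mulrC -/a; lra.
- rewrite (_ : _ * _ = y * b); first lra.
  by rewrite /b; ring.
exists U; split=> //; apply: le_lt_trans QU _.
by rewrite ltr_pM2r // ltrDl.
Qed.
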